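(* Let $\mathcal{X},\mathcal{Y}$ be finite sets, $\mathcal{P}$ a family of strictly positive joint pmfs on $\mathcal{X}\times\mathcal{Y}$, $\rho>0$ and $q\in\mathbb{R}\setminus\{0\}$. Suppose $C_{q,\rho}=\min_{Q}\sup_{P\in\mathcal{P}}q\,\mathcal{RE}_{(\frac{q}{1+\rho},q)}(P,Q)$, the minimum over strictly positive joint pmfs $Q$ on $\mathcal{X}\times\mathcal{Y}$, exists (is finite) and is attained at some $Q^\ast$. Then (i) for every conditional guessing function $G$, $$\sup_{P\in\mathcal{P}}R_{q,\rho}(P,G)\;\geq\;C_{q,\rho}-\ln(1+\ln|\mathcal{X}|);$$ (ii) the conditional guessing function $\widetilde{G}=G^\ast_{Q^\ast}$ (guessing, for each $y$, in decreasing order of $Q^\ast_q(x|y)$) satisfies $$\sup_{P\in\mathcal{P}}R_{q,\rho}(P,\widetilde{G})\;\leq\;C_{q,\rho}+\ln(1+\ln|\mathcal{X}|).$$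
   Context: A conditional guessing function is a map $G(\cdot|\cdot)$ on $\mathcal{X}\times\mathcal{Y}$ such that for each $y$, $x\mapsto G(x|y)$ is a bijection from $\mathcal{X}$ onto $\{1,\dots,|\mathcal{X}|\}$. The $q$-normalized expectation under $P$ is $E_q[F(X,Y)]=\frac{\sum_{x,y}F(x,y)P(x,y)^q}{\sum_{x,y}P(x,y)^q}$. For a strictly positive joint pmf $R$: $R(x|y)=R(x,y)/\sum_{x'}R(x',y)$ and $R_q(x|y)=R(x|y)^q/\sum_{x'}R(x'|y)^q$; $G^\ast_R$ denotes any conditional guessing function such that $G^\ast_R(x|y)<G^\ast_R(x'|y)$ implies $R_q(x|y)\ge R_q(x'|y)$. The redundancy is $R_{q,\rho}(P,G)=\frac1\rho\ln E_q[G(X|Y)^\rho]-\frac1\rho\ln E_q[G^\ast_P(X|Y)^\rho]$, expectations w.r.t. $P$. For strictly positive joint pmfs $P,Q$ and $\alpha\neq\beta$, $\alpha\beta\ne0$, the conditional relative $(\alpha,\beta)$-entropy is $$\mathcal{RE}_{(\alpha,\beta)}(P,Q)=\frac{\alpha}{\beta(\beta-\alpha)}\ln\frac{\sum_{y}\left\{\sum_{x}P(x,y)^\beta Q(x,y)^{\alpha-\beta}\right\}\left\{\sum_{x}Q(x,y)^{\alpha}\right\}^{\frac{\beta}{\alpha}-1}}{\sum_{y}\left\{\sum_{x}P(x,y)^\alpha\right\}^{\frac{\beta}{\alpha}}}.$$ *)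

From HB Require Import structures.
From Stdlib Require Import Reals ClassicalEpsilon.
From mathcomp Require Import all_boot.

Set Implicit Arguments.
Unset Strict Implicit.
Unset Printing Implicit Defensive.

Local Open Scope R_scope.

Lemma Rplus_assoc' : associative Rplus.
Proof. by move=> a b c; rewrite Rplus_assoc. Qed.

HB.instance Definition _ :=
  Monoid.isComLaw.Build R R0 Rplus Rplus_assoc' Rplus_comm Rplus_0_l.

Definition sumR (T : finType) (f : T -> R) : R := \big[Rplus/R0]_(t : T) f t.

Section Defs.
Variables (X Y : finType).

Definition pos_pmf (P : X -> Y -> R) : Prop :=
  (forall x y, 0 < P x y) /\ sumR (fun x => sumR (fun y => P x y)) = 1.

Definition cond_guess (G : X -> Y -> nat) : Prop :=
  forall y,
    (forall x, (1 <= G x y <= #|X|)%N) /\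
    (forall x x', G x y = G x' y -> x = x') /\
    (forall k, (1 <= k <= #|X|)%N -> exists x, G x y = k).

Definition Eq (q : R) (P : X -> Y -> R) (F : X -> Y -> R) : R :=
  sumR (fun x => sumR (fun y => F x y * Rpower (P x y) q)) /
  sumR (fun x => sumR (fun y => Rpower (P x y) q)).

Definition condp (Rj : X -> Y -> R) (x : X) (y : Y) : R :=
  Rj x y / sumR (fun x' => Rj x' y).

Definition condq (q : R) (Rj : X -> Y -> R) (x : X) (y : Y) : R :=
  Rpower (condp Rj x y) q / sumR (fun x' => Rpower (condp Rj x' y) q).

Definition is_Gstar (q : R) (Rj : X -> Y -> R) (G : X -> Y -> nat) : Prop :=
  cond_guess G /\
  forall x x' y, (G x y < G x' y)%N -> condq q Rj x' y <= condq q Rj x y.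

Definition guess_moment (q rho : R) (P : X -> Y -> R) (G : X -> Y -> nat) : R :=
  Eq q P (fun x y => Rpower (INR (G x y)) rho).

(* E_q[G^*_P(X|Y)^rho]: the value for any G^*_P (it does not depend on the
   choice of G^*_P); chosen via the epsilon operator *)
Definition opt_moment (q rho : R) (P : X -> Y -> R) : R :=
  epsilon (inhabits 0)
    (fun v => exists G, is_Gstar q P G /\ v = guess_moment q rho P G).

Definition redundancy (q rho : R) (P : X -> Y -> R) (G : X -> Y -> nat) : R :=
  / rho * ln (guess_moment q rho P G) - / rho * ln (opt_moment q rho P).

Definition RE (alpha beta : R) (P Q : X -> Y -> R) : R :=
  alpha / (beta * (beta - alpha)) *
  ln (sumR (fun y =>
          sumR (fun x => Rpower (P x y) beta * Rpower (Q x y) (alpha - beta)) *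
          Rpower (sumR (fun x => Rpower (Q x y) alpha)) (beta / alpha - 1))
      / sumR (fun y => Rpower (sumR (fun x => Rpower (P x y) alpha)) (beta / alpha))).

End Defs.

From Stdlib Require Import Reals Lra ClassicalEpsilon Classical.
From mathcomp Require Import all_boot.

Set Implicit Arguments.
Unset Strict Implicit.
Unset Printing Implicit Defensive.

Local Open Scope R_scope.

(* Write a = q/(1+rho) and K = 1 + ln|X|, and consider, for joint pmfs P, Q
   and a conditional guessing function G, the unnormalised quantities
     moment P G  = sum_{x,y} G(x|y)^rho P(x,y)^q,
     cross P Q   = sum_y (sum_x P^q Q^(a-q)) (sum_x Q^a)^rho,
     renyi P     = sum_y (sum_x P^a)^(1+rho),
     hmoment P G = sum_y (sum_x G^rho P^q) (sum_x 1/G(x|y))^rho.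
   Then rho * q * RE_(a,q)(P,Q) = ln cross P Q - ln renyi P, and the
   normalisation of E_q cancels in the redundancy, which becomes
   (ln moment P G - ln moment P G*_P) / rho.  Four inequalities drive the
   proof:
     (A) moment P G <= cross P Q whenever G = G*_Q   (Arikan's guessing bound);
     (B) renyi P <= hmoment P G                      (Hoelder's inequality);
     (C) hmoment P G <= moment P G * K^rho          (harmonic sums, 1/G);
     (D) cross P Q_G = hmoment P G for Q_G(x,y) proportional to
         G(x|y)^(-(1+rho)/q).
   Since cross P P = renyi P, (A)-(C) pin moment P G*_P between
   renyi P / K^rho and renyi P, hence two-sided bounds on the redundancy.
   Part (i) follows by comparing with the competitor Q_G via (D) and the
   minimality of C; part (ii) from (A) with Q = Q*. *)

Section FiniteSums.
Variable T : finType.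

Lemma sumR_le (f g : T -> R) : (forall t, f t <= g t) -> sumR f <= sumR g.
Proof.
move=> H; rewrite /sumR; apply: (big_ind2 (fun a b => a <= b)) => //.
- lra.
- move=> *; lra.
Qed.

Lemma sumR_gt0 (f : T -> R) (t0 : T) : (forall t, 0 < f t) -> 0 < sumR f.
Proof.
move=> H; rewrite /sumR (bigD1 t0) //=.
have Hrest : 0 <= \big[Rplus/R0]_(i | i != t0) f i.
  by apply: (big_ind (fun a => 0 <= a)) => //; [lra|move=> *; lra|move=> i _; left].
have := H t0; lra.
Qed.

Lemma sumR_scal (c : R) (f : T -> R) : sumR (fun t => c * f t) = c * sumR f.
Proof. by rewrite /sumR; elim/big_rec2: _ => [|i u v _ ->]; lra. Qed.

Lemma sumR_add (f g : T -> R) : sumR (fun t => f t + g t) = sumR f + sumR g.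
Proof. by rewrite /sumR big_split. Qed.

Lemma sumR_ext (f g : T -> R) : (forall t, f t = g t) -> sumR f = sumR g.
Proof. by move=> H; rewrite /sumR; apply: eq_bigr => i _; apply: H. Qed.
End FiniteSums.

Arguments sumR_le {T f g} _.
Arguments sumR_gt0 {T f} t0 _.
Arguments sumR_ext {T f g} _.

Lemma sumR_exchange (X Y : finType) (F : X -> Y -> R) :
  sumR (fun x => sumR (fun y => F x y)) = sumR (fun y => sumR (fun x => F x y)).
Proof. by rewrite /sumR; apply: exchange_big. Qed.

Lemma ln_le a b : 0 < a -> a <= b -> ln a <= ln b.
Proof. by move=> Ha [Hab|->]; [left; apply: ln_increasing|lra]. Qed.

Lemma ln_le_sub1 z : 0 < z -> ln z <= z - 1.
Proof. by move=> Hz; have := exp_ineq1_le (ln z); rewrite exp_ln //; lra. Qed.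

Lemma Rpower_inv a s : 0 < a -> Rpower (/ a) s = / Rpower a s.
Proof. by move=> Ha; rewrite /Rpower ln_Rinv // -exp_Ropp; f_equal; ring. Qed.

Lemma Rpower_pos a s : 0 < Rpower a s.
Proof. exact: exp_pos. Qed.

Lemma Rpower_ge1 r s : 1 <= r -> 0 <= s -> 1 <= Rpower r s.
Proof.
move=> Hr Hs; have := Rle_Rpower_l 1 r s Hs (conj Rlt_0_1 Hr).
by rewrite /Rpower ln_1 Rmult_0_r exp_0.
Qed.

Lemma count_iota (n m : nat) :
  \big[Rplus/R0]_(k <- iota 1 n) (if (k <= m)%N then 1 else 0) = INR (minn m n).
Proof.
elim: n => [|n IH]; first by rewrite big_nil minn0.
rewrite -(addn1 n) iotaD add1n addn1 big_cat IH /= big_cons big_nil.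
case: (leqP n m) => Hnm.
- case: (ltnP n m) => H.
  + rewrite (minn_idPr H) S_INR; lra.
  + have -> : m = n by apply/eqP; rewrite eqn_leq H Hnm.
    rewrite (minn_idPl (leqnSn n)); lra.
- rewrite ifF; last by apply/negbTE; rewrite -leqNgt ltnW.
  rewrite (minn_idPl (leqW (ltnW Hnm))); lra.
Qed.

Lemma harmonic_le n : (1 <= n)%N ->
  \big[Rplus/R0]_(k <- iota 1 n) / INR k <= 1 + ln (INR n).
Proof.
elim: n => [//|n IH] _.
rewrite -(addn1 n) iotaD add1n addn1 big_cat /= big_cons big_nil.
case: n IH => [|n] IH; first by rewrite big_nil /= ln_1; lra.
have Hn : 0 < INR n.+1 by apply: lt_0_INR; apply/ltP.
(* 1/(n+2) <= ln (n+2) - ln (n+1), from ln z <= z - 1 at z = (n+1)/(n+2) *)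
have Hstep : / (INR n.+1 + 1) <= ln (INR n.+1 + 1) - ln (INR n.+1).
  have Hz : 0 < INR n.+1 / (INR n.+1 + 1) by apply: Rdiv_lt_0_compat; lra.
  have := ln_le_sub1 Hz.
  rewrite /Rdiv ln_mult ?ln_Rinv; try (apply: Rinv_0_lt_compat); try lra.
  have -> : INR n.+1 * / (INR n.+1 + 1) - 1 = - / (INR n.+1 + 1) by field; lra.
  lra.
have := IH isT; rewrite (S_INR n.+1); lra.
Qed.

Lemma young a b s : 0 < a -> 0 < b -> 0 < s < 1 ->
  Rpower a s * Rpower b (1 - s) <= s * a + (1 - s) * b.
Proof.
move=> Ha Hb Hs; rewrite /Rpower -exp_plus.
set m := s * ln a + (1 - s) * ln b.
(* tangent-line bound exp m * (1 + (ln c - m)) <= c, from e^t >= 1 + t *)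
have tangent c : 0 < c -> exp m * (1 + (ln c - m)) <= c.
  move=> Hc; have := exp_ineq1_le (ln c - m).
  rewrite /Rminus exp_plus exp_ln // exp_Ropp => H.
  have := Rmult_le_compat_l (exp m) _ _ (Rlt_le _ _ (exp_pos m)) H.
  by rewrite (Rmult_comm c) -Rmult_assoc Rinv_r ?Rmult_1_l; [|apply: Rgt_not_eq; apply: exp_pos].
have := Rmult_le_compat_l s _ _ (ltac:(lra) : 0 <= s) (tangent a Ha).
have := Rmult_le_compat_l (1 - s) _ _ (ltac:(lra) : 0 <= 1 - s) (tangent b Hb).
have : s * (exp m * (1 + (ln a - m))) + (1 - s) * (exp m * (1 + (ln b - m)))
       = exp m by rewrite /m; ring.
lra.
Qed.

Lemma holder (T : finType) (t0 : T) (u v : T -> R) s :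
  (forall t, 0 < u t) -> (forall t, 0 < v t) -> 0 < s < 1 ->
  sumR (fun t => Rpower (u t) s * Rpower (v t) (1 - s)) <=
  Rpower (sumR u) s * Rpower (sumR v) (1 - s).
Proof.
move=> Hu Hv Hs.
set A := sumR u; set B := sumR v.
have HA : 0 < A by apply: (sumR_gt0 t0).
have HB : 0 < B by apply: (sumR_gt0 t0).
set C := Rpower A s * Rpower B (1 - s).
have HC : 0 < C by apply: Rmult_lt_0_compat; apply: Rpower_pos.
(* normalise u and v to unit mass *)
have Hnorm t : Rpower (u t) s * Rpower (v t) (1 - s) =
    C * (Rpower (u t / A) s * Rpower (v t / B) (1 - s)).
  rewrite /Rdiv -!Rpower_mult_distr ?Rpower_inv //; try (apply: Rinv_0_lt_compat; done).
  rewrite /C; field; split; apply: Rgt_not_eq; apply: Rpower_pos.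
rewrite (sumR_ext Hnorm) sumR_scal.
have Hle : sumR (fun t => Rpower (u t / A) s * Rpower (v t / B) (1 - s)) <= 1.
  apply: Rle_trans (sumR_le (fun t => young (Rdiv_lt_0_compat _ _ (Hu t) HA)
                                      (Rdiv_lt_0_compat _ _ (Hv t) HB) Hs)) _.
  rewrite sumR_add !sumR_scal /Rdiv.
  rewrite (sumR_ext (fun t => Rmult_comm (u t) (/ A))).
  rewrite (sumR_ext (fun t => Rmult_comm (v t) (/ B))).
  rewrite !sumR_scal -/A -/B !Rinv_l; lra.
have := Rmult_le_compat_l C _ _ (Rlt_le _ _ HC) Hle; lra.
Qed.

Definition guess_order (T : finType) (g : T -> nat) : Prop :=
  (forall x, (1 <= g x <= #|T|)%N) /\ injective g /\
  (forall k, (1 <= k <= #|T|)%N -> exists x, g x = k).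

Lemma cond_guess_slice (X Y : finType) (G : X -> Y -> nat) :
  cond_guess G -> forall y, guess_order (G^~ y).
Proof. by move=> HG y; apply: HG. Qed.

Section GuessOrder.
Variables (T : finType) (g : T -> nat).
Hypothesis Hg : guess_order g.

Lemma guess_reindex (h : nat -> R) :
  sumR (fun x => h (g x)) = \big[Rplus/R0]_(k <- iota 1 #|T|) h k.
Proof.
case: Hg => Hrange [Hinj Hsurj].
rewrite /sumR -(big_map g xpredT h); apply: perm_big; apply: uniq_perm.
- by rewrite map_inj_uniq //; apply: index_enum_uniq.
- exact: iota_uniq.
- move=> k; rewrite mem_iota add1n ltnS; apply/idP/idP.
  + by case/mapP=> x _ ->; apply: Hrange.
  + by case/Hsurj=> x <-; apply: map_f; rewrite mem_index_enum.
Qed.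

Lemma guess_pos x : 0 < INR (g x).
Proof. by apply: lt_0_INR; apply/ltP; case/andP: (proj1 Hg x). Qed.

Lemma guess_rank x : INR (g x) = sumR (fun x' => if (g x' <= g x)%N then 1 else 0).
Proof.
rewrite (guess_reindex (fun k => if (k <= g x)%N then 1 else 0)) count_iota.
by case/andP: (proj1 Hg x) => _ /minn_idPl ->.
Qed.

Lemma guess_harmonic (x0 : T) : sumR (fun x => / INR (g x)) <= 1 + ln (INR #|T|).
Proof.
rewrite (guess_reindex (fun k => / INR k)); apply: harmonic_le.
by case/andP: (proj1 Hg x0) => H1 H2; apply: leq_trans H1 H2.
Qed.

Lemma guess_le_ratio_sum (w : T -> R) (s : R) (x : T) :
  (forall x x', (g x < g x')%N -> w x' <= w x) -> (forall x, 0 < w x) -> 0 < s ->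
  INR (g x) <= sumR (fun x' => Rpower (w x' / w x) s).
Proof.
move=> Hord Hw Hs; rewrite guess_rank; apply: sumR_le => x'.
case: ifP => Hle; last exact: Rlt_le (Rpower_pos _ _).
apply: Rpower_ge1; last lra.
have Hww : w x <= w x'.
  move: Hle; rewrite leq_eqVlt => /orP [/eqP Heq|Hlt]; last exact: Hord.
  by rewrite ((proj1 (proj2 Hg)) _ _ Heq); lra.
have := Rmult_le_compat_r (/ w x) _ _ (Rlt_le _ _ (Rinv_0_lt_compat _ (Hw x))) Hww.
by rewrite Rinv_r //; apply: Rgt_not_eq.
Qed.
End GuessOrder.

(* Existence of an optimal guessing function G*_P for every P: sort each
   column by non-increasing P_q(.|y). *)
Lemma Gstar_exists (X Y : finType) q (P : X -> Y -> R) : exists G, is_Gstar q P G.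
Proof.
pose r y := fun u v : X => if Rle_dec (condq q P v y) (condq q P u y) then true else false.
pose s y := sort (r y) (enum X).
exists (fun x y => (index x (s y)).+1).
have Hsz y : size (s y) = #|X| by rewrite size_sort cardE.
have Hun y : uniq (s y) by rewrite sort_uniq enum_uniq.
have Hmem y x : x \in s y by rewrite mem_sort mem_enum.
have Htr y : transitive (r y).
  move=> v u w; rewrite /r.
  by do 3 case: Rle_dec => //; move=> *; exfalso; lra.
have Hto y : total (r y).
  move=> u v; rewrite /r.
  by do 2 case: Rle_dec => //; move=> *; exfalso; lra.
split.
- move=> y; split; [|split].
  + by move=> x; rewrite ltnS -(Hsz y) index_mem Hmem.
  + move=> x x' [] Hxx'.
    by rewrite -(nth_index x (Hmem y x)) Hxx' nth_index.
  + move=> [//|k] /andP [_ Hk].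
    have [d _] : exists d : X, True.
      by case: (s y) (Hsz y) Hk => [<-|d _ _ _]; [|exists d].
    exists (nth d (s y) k).
    by rewrite index_uniq // Hsz.
- move=> x x' y /= Hlt.
  have := @sorted_ltn_nth _ (r y) (Htr y) x (s y) (sort_sorted (Hto y) _)
            (index x (s y)) (index x' (s y)).
  rewrite ltnS in Hlt.
  rewrite !inE !index_mem !Hmem !nth_index // => /(_ isT isT Hlt).
  by rewrite /r; case: Rle_dec.
Qed.

Lemma opt_moment_spec (X Y : finType) q rho (P : X -> Y -> R) :
  exists G', is_Gstar q P G' /\ opt_moment q rho P = guess_moment q rho P G'.
Proof.
have [G HG] := Gstar_exists q P.
have : exists v, exists G, is_Gstar q P G /\ v = guess_moment q rho P G.
  by exists (guess_moment q rho P G); exists G.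
by move/(epsilon_spec (inhabits 0)); rewrite -/(opt_moment q rho P).
Qed.

Lemma pos_pmf_inhabited (X Y : finType) (P : X -> Y -> R) :
  pos_pmf P -> exists (x0 : X) (y0 : Y), True.
Proof.
case=> _ Hsum.
case: (pickP (@predT X)) => [x0 _|HX]; last first.
  by move: Hsum; rewrite /sumR big1 => [|x]; [lra|have := HX x].
case: (pickP (@predT Y)) => [y0 _|HY]; first by exists x0, y0.
move: Hsum; rewrite /sumR big1 => [|x _]; first lra.
by rewrite big1 // => y; have := HY y.
Qed.

Section Redundancy.
Variables (X Y : finType) (q rho : R).
Hypothesis Hrho : 0 < rho.
Hypothesis Hq : q <> 0.
Variables (x0 : X) (y0 : Y).
Implicit Types (P Q : X -> Y -> R) (G : X -> Y -> nat).

Local Notation a := (q / (1 + rho)).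
Local Notation K := (1 + ln (INR #|X|)).

Definition moment (P : X -> Y -> R) (G : X -> Y -> nat) : R :=
  sumR (fun x => sumR (fun y => Rpower (INR (G x y)) rho * Rpower (P x y) q)).

Definition cross (P Q : X -> Y -> R) : R :=
  sumR (fun y => sumR (fun x => Rpower (P x y) q * Rpower (Q x y) (a - q)) *
     Rpower (sumR (fun x => Rpower (Q x y) a)) rho).

Definition renyi (P : X -> Y -> R) : R :=
  sumR (fun y => Rpower (sumR (fun x => Rpower (P x y) a)) (1 + rho)).

Definition hmoment (P : X -> Y -> R) (G : X -> Y -> nat) : R :=
  sumR (fun y => sumR (fun x => Rpower (INR (G x y)) rho * Rpower (P x y) q) *
     Rpower (sumR (fun x => / INR (G x y))) rho).

Definition QG_mass (G : X -> Y -> nat) : R :=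
  sumR (fun x => sumR (fun y => Rpower (INR (G x y)) (- (1 + rho) / q))).

Definition QG (G : X -> Y -> nat) (x : X) (y : Y) : R :=
  Rpower (INR (G x y)) (- (1 + rho) / q) / QG_mass G.

Lemma moment_pos P G : 0 < moment P G.
Proof.
apply: (sumR_gt0 x0) => x; apply: (sumR_gt0 y0) => y.
by apply: Rmult_lt_0_compat; apply: Rpower_pos.
Qed.

Lemma renyi_pos P : 0 < renyi P.
Proof. by apply: (sumR_gt0 y0) => y; apply: Rpower_pos. Qed.

Lemma cross_pos P Q : 0 < cross P Q.
Proof.
apply: (sumR_gt0 y0) => y; apply: Rmult_lt_0_compat; last exact: Rpower_pos.
by apply: (sumR_gt0 x0) => x; apply: Rmult_lt_0_compat; apply: Rpower_pos.
Qed.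

Lemma QG_mass_pos G : 0 < QG_mass G.
Proof. by apply: (sumR_gt0 x0) => x; apply: (sumR_gt0 y0) => y; apply: Rpower_pos. Qed.

Lemma QG_pmf G : pos_pmf (QG G).
Proof.
have HZ := QG_mass_pos G.
split=> [x y|]; first by apply: Rdiv_lt_0_compat => //; apply: Rpower_pos.
rewrite (sumR_ext (g := fun x => / QG_mass G *
    sumR (fun y => Rpower (INR (G x y)) (- (1 + rho) / q)))).
  by rewrite sumR_scal Rinv_l //; apply: Rgt_not_eq.
by move=> x; rewrite -sumR_scal; apply: sumR_ext => y; rewrite /QG /Rdiv Rmult_comm.
Qed.

Lemma RE_log P Q :
  rho * (q * RE (q / (1 + rho)) q P Q) = ln (cross P Q) - ln (renyi P).
Proof.
have Hqa : q / (q / (1 + rho)) = 1 + rho by field; split; lra.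
rewrite /RE Hqa (_ : 1 + rho - 1 = rho); last ring.
rewrite -/(renyi P) -/(cross P Q).
have Hqrho : q * (1 + rho) - q <> 0.
  rewrite (_ : _ - q = q * rho); last ring.
  by apply: Rmult_integral_contrapositive_currified; lra.
have -> : forall L, rho * (q * (a / (q * (q - a)) * L)) = L.
  by move=> L; field; repeat split; lra.
rewrite /Rdiv ln_mult ?ln_Rinv; try apply: Rinv_0_lt_compat;
  try apply: cross_pos; try apply: renyi_pos; ring.
Qed.

Lemma cross_self P : cross P P = renyi P.
Proof.
apply: sumR_ext => y.
rewrite (sumR_ext (g := fun x => Rpower (P x y) a)); last first.
  by move=> x; rewrite -Rpower_plus; f_equal; ring.
rewrite Rpower_plus Rpower_1 //.
by apply: (sumR_gt0 x0) => x; apply: Rpower_pos.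
Qed.

Lemma condq_eq Q (HQ : forall x y, 0 < Q x y) x y :
  condq q Q x y = Rpower (Q x y) q / sumR (fun x' => Rpower (Q x' y) q).
Proof.
rewrite /condq /condp.
set S := sumR (fun x' => Q x' y).
have HS : 0 < S by apply: (sumR_gt0 x) => t; apply: HQ.
have Hsplit x' : Rpower (Q x' y / S) q = / Rpower S q * Rpower (Q x' y) q.
  by rewrite /Rdiv -Rpower_mult_distr ?Rpower_inv //; [ring|apply: Rinv_0_lt_compat].
rewrite Hsplit (sumR_ext Hsplit) sumR_scal.
have := Rpower_pos S q.
have : 0 < sumR (fun x' => Rpower (Q x' y) q) by apply: (sumR_gt0 x) => t; apply: Rpower_pos.
move=> *; field; split; lra.
Qed.

Lemma Gstar_order Q G : (forall x y, 0 < Q x y) -> is_Gstar q Q G ->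
  forall x x' y, (G x y < G x' y)%N -> Rpower (Q x' y) q <= Rpower (Q x y) q.
Proof.
move=> HQ [_ Hord] x x' y /Hord; rewrite !condq_eq //.
apply: Rmult_le_reg_r; apply: Rinv_0_lt_compat.
by apply: (sumR_gt0 x) => t; apply: Rpower_pos.
Qed.

Lemma Gstar_point Q G : (forall x y, 0 < Q x y) -> is_Gstar q Q G -> forall x y,
  Rpower (INR (G x y)) rho <=
  Rpower (Q x y) (a - q) * Rpower (sumR (fun x' => Rpower (Q x' y) a)) rho.
Proof.
move=> HQ HG x y.
have Hg := cond_guess_slice (proj1 HG) y.
have Hs : 0 < / (1 + rho) by apply: Rinv_0_lt_compat; lra.
have Hu := guess_le_ratio_sum Hg x (fun u v => @Gstar_order Q G HQ HG u v y)
  (fun t => Rpower_pos (Q t y) q) Hs.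
have Hratio : sumR (fun x' => Rpower (Rpower (Q x' y) q / Rpower (Q x y) q) (/ (1 + rho))) =
   sumR (fun x' => Rpower (Q x' y) a) * exp (- a * ln (Q x y)).
  rewrite Rmult_comm -sumR_scal; apply: sumR_ext => t.
  rewrite /Rpower /Rdiv ln_mult ?ln_Rinv ?ln_exp -?exp_plus;
    try apply: Rinv_0_lt_compat; try apply: exp_pos.
  by f_equal; field; lra.
rewrite Hratio in Hu.
have := Rle_Rpower_l _ _ rho (Rlt_le _ _ Hrho) (conj (guess_pos Hg x) Hu).
rewrite -Rpower_mult_distr; [|by apply: (sumR_gt0 x) => t; apply: Rpower_pos|exact: exp_pos].
have -> : Rpower (exp (- a * ln (Q x y))) rho = Rpower (Q x y) (a - q).
  by rewrite /Rpower ln_exp; f_equal; field; lra.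
lra.
Qed.

Lemma moment_le_cross P Q G : (forall x y, 0 < Q x y) -> is_Gstar q Q G ->
  moment P G <= cross P Q.
Proof.
move=> HQ HG.
apply: Rle_trans (sumR_le (fun x => sumR_le (fun y =>
  Rmult_le_compat_r _ _ _ (Rlt_le _ _ (Rpower_pos (P x y) q))
    (Gstar_point HQ HG x y)))) _.
rewrite sumR_exchange; right; apply: sumR_ext => y.
by rewrite Rmult_comm -sumR_scal; apply: sumR_ext => x; ring.
Qed.

(* (B) Hoelder with exponents 1+rho and (1+rho)/rho, applied to
   (G^rho P^q)^(1/(1+rho)) * (1/G)^(rho/(1+rho)) = P^a in each column. *)
Lemma renyi_le_hmoment P G : cond_guess G -> renyi P <= hmoment P G.
Proof.
move=> HG; apply: sumR_le => y.
have Hg := cond_guess_slice HG y.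
set s := / (1 + rho).
have Hs : 0 < s < 1.
  split; first (apply: Rinv_0_lt_compat; lra).
  rewrite /s -Rinv_1; apply: Rinv_lt_contravar; lra.
set u := fun x => Rpower (INR (G x y)) rho * Rpower (P x y) q.
set v := fun x => / INR (G x y).
have Hu x : 0 < u x by apply: Rmult_lt_0_compat; apply: Rpower_pos.
have Hv x : 0 < v x by apply: Rinv_0_lt_compat; apply: (guess_pos Hg).
have H := holder x0 Hu Hv Hs.
have Hcol x : Rpower (u x) s * Rpower (v x) (1 - s) = Rpower (P x y) a.
  rewrite /u /v /Rpower ln_mult ?ln_Rinv ?ln_exp -?exp_plus;
    try apply: exp_pos; try apply: (guess_pos Hg).
  by f_equal; rewrite /s; field; lra.
rewrite (sumR_ext Hcol) in H.
have HA : 0 < sumR (fun x => Rpower (P x y) a) by apply: (sumR_gt0 x0) => x; apply: Rpower_pos.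
have := Rle_Rpower_l _ _ (1 + rho) (ltac:(lra) : 0 <= 1 + rho) (conj HA H).
rewrite -Rpower_mult_distr; try apply: Rpower_pos.
rewrite !Rpower_mult.
have -> : s * (1 + rho) = 1 by rewrite /s; field; lra.
have -> : (1 - s) * (1 + rho) = rho by rewrite /s; field; lra.
by rewrite Rpower_1 //; apply: (sumR_gt0 x0).
Qed.

(* (C) each column has sum_x 1/G(x|y) <= K. *)
Lemma hmoment_le_moment P G : cond_guess G -> hmoment P G <= moment P G * Rpower K rho.
Proof.
move=> HG.
rewrite /hmoment /moment sumR_exchange Rmult_comm -sumR_scal; apply: sumR_le => y.
have Hg := cond_guess_slice HG y.
have Hv : 0 < sumR (fun x => / INR (G x y)).
  by apply: (sumR_gt0 x0) => x; apply: Rinv_0_lt_compat; apply: (guess_pos Hg).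
have Hmy : 0 <= sumR (fun x => Rpower (INR (G x y)) rho * Rpower (P x y) q).
  by left; apply: (sumR_gt0 x0) => x; apply: Rmult_lt_0_compat; apply: Rpower_pos.
have := Rle_Rpower_l _ _ rho (Rlt_le _ _ Hrho) (conj Hv (guess_harmonic Hg x0)).
move/(Rmult_le_compat_l _ _ _ Hmy); lra.
Qed.

Lemma ln_hmoment_le P G : cond_guess G ->
  ln (hmoment P G) <= ln (moment P G) + rho * ln K.
Proof.
move=> HG; rewrite -ln_Rpower -ln_mult; [|exact: moment_pos|exact: Rpower_pos].
apply: ln_le (hmoment_le_moment P HG).
apply: (sumR_gt0 y0) => y; apply: Rmult_lt_0_compat; last exact: Rpower_pos.
by apply: (sumR_gt0 x0) => x; apply: Rmult_lt_0_compat; apply: Rpower_pos.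
Qed.

(* (D) against Q_G the cross term equals hmoment: with Z = QG_mass G,
   Q_G^(a-q) = Z^(q-a) G^rho and Q_G^a = Z^(-a) / G, and q - a - a rho = 0. *)
Lemma cross_QG P G : cond_guess G -> cross P (QG G) = hmoment P G.
Proof.
move=> HG; apply: sumR_ext => y.
have Hg := cond_guess_slice HG y.
set Z := QG_mass G.
have HZ : 0 < Z := QG_mass_pos G.
have lnQ x : ln (QG G x y) = (- (1 + rho) / q) * ln (INR (G x y)) - ln Z.
  rewrite /QG -/Z /Rdiv ln_mult ?ln_Rinv ?ln_Rpower //;
    [exact: Rpower_pos|exact: Rinv_0_lt_compat].
have E1 x : Rpower (P x y) q * Rpower (QG G x y) (a - q) =
    Rpower Z (q - a) * (Rpower (INR (G x y)) rho * Rpower (P x y) q).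
  rewrite {2}/Rpower lnQ /Rpower -!exp_plus; f_equal; field; lra.
have E2 x : Rpower (QG G x y) a = Rpower Z (- a) * / INR (G x y).
  rewrite /Rpower lnQ -{2}(exp_ln _ (guess_pos Hg x)) -exp_Ropp -exp_plus.
  by f_equal; field; lra.
rewrite (sumR_ext E1) (sumR_ext E2) !sumR_scal.
have Hv : 0 < sumR (fun x => / INR (G x y)).
  by apply: (sumR_gt0 x0) => x; apply: Rinv_0_lt_compat; apply: (guess_pos Hg).
rewrite -Rpower_mult_distr ?Rpower_mult; try apply: Rpower_pos; last exact: Hv.
have EZ : Rpower Z (q - a) * Rpower Z (- a * rho) = 1.
  rewrite -Rpower_plus.
  have -> : q - a + - a * rho = 0 by field; lra.
  exact: Rpower_O.
have regroup z1 m z2 h : z1 * m * (z2 * h) = (z1 * z2) * (m * h) by ring.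
by rewrite regroup EZ Rmult_1_l.
Qed.

(* The normalisation of E_q cancels: with G' = G*_P realising opt_moment,
   rho * redundancy = ln moment P G - ln moment P G'. *)
Lemma redundancy_moment P G G' :
  opt_moment q rho P = guess_moment q rho P G' ->
  rho * redundancy q rho P G = ln (moment P G) - ln (moment P G').
Proof.
move=> Eopt.
set Zq := sumR (fun x => sumR (fun y => Rpower (P x y) q)).
have HZq : 0 < Zq.
  by apply: (sumR_gt0 x0) => x; apply: (sumR_gt0 y0) => y; apply: Rpower_pos.
have Hm := moment_pos P G; have Hm' := moment_pos P G'.
rewrite /redundancy Eopt /guess_moment /Eq -/Zq -/(moment P G) -/(moment P G').
have HZq' : 0 < / Zq by apply: Rinv_0_lt_compat.
rewrite /Rdiv !ln_mult ?ln_Rinv //; field; lra.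
Qed.

(* Since moment P G*_P lies between renyi P / K^rho and renyi P, the
   redundancy is (ln moment P G - ln renyi P)/rho up to an additive ln K. *)
Lemma redundancy_log_bounds P G : (forall x y, 0 < P x y) -> cond_guess G ->
  ln (moment P G) - ln (renyi P) <= rho * redundancy q rho P G <=
  ln (moment P G) - ln (renyi P) + rho * ln K.
Proof.
move=> HP HG.
have [G' [HG' Eopt]] := opt_moment_spec q rho P.
rewrite (redundancy_moment G Eopt).
have Hup : ln (moment P G') <= ln (renyi P).
  by rewrite -cross_self; apply: ln_le (moment_pos _ _) (moment_le_cross _ HP HG').
have Hlow : ln (renyi P) <= ln (hmoment P G').
  by apply: ln_le (renyi_pos P) (renyi_le_hmoment _ (proj1 HG')).
have := ln_hmoment_le P (proj1 HG'); lra.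
Qed.

Lemma RE_QG_le_redundancy P G : (forall x y, 0 < P x y) -> cond_guess G ->
  q * RE (q / (1 + rho)) q P (QG G) <= redundancy q rho P G + ln K.
Proof.
move=> HP HG; apply: (Rmult_le_reg_l rho) => //.
rewrite Rmult_plus_distr_l RE_log cross_QG //.
have := ln_hmoment_le P HG; have := redundancy_log_bounds HP HG; lra.
Qed.

Lemma redundancy_le_RE P Q G : (forall x y, 0 < P x y) -> (forall x y, 0 < Q x y) ->
  is_Gstar q Q G -> redundancy q rho P G <= q * RE (q / (1 + rho)) q P Q + ln K.
Proof.
move=> HP HQ HG; apply: (Rmult_le_reg_l rho) => //.
rewrite Rmult_plus_distr_l RE_log.
have := ln_le (moment_pos P G) (moment_le_cross P HQ HG).
have := redundancy_log_bounds HP (proj1 HG); lra.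
Qed.
End Redundancy.

Theorem theorem7 (X Y : finType) (Fam : (X -> Y -> R) -> Prop)
  (rho q : R) (Hrho : 0 < rho) (Hq : q <> 0)
  (HFam : forall P, Fam P -> pos_pmf P)
  (C : R) (Qstar : X -> Y -> R) (HQstar : pos_pmf Qstar)
  (* C = sup_{P in Fam} q RE_{(q/(1+rho), q)}(P, Qstar) *)
  (HC : is_lub (fun v => exists P, Fam P /\ v = q * RE (q / (1 + rho)) q P Qstar) C)
  (* for every other Q, sup_{P in Fam} q RE(P, Q) >= C *)
  (Hmin : forall Q : X -> Y -> R, pos_pmf Q ->
     forall v, is_upper_bound (fun w => exists P, Fam P /\ w = q * RE (q / (1 + rho)) q P Q) v ->
     C <= v) :
  (* (i) *)
  (forall G : X -> Y -> nat, cond_guess G ->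
     forall b, b < C - ln (1 + ln (INR #|X|)) ->
     exists P, Fam P /\ b < redundancy q rho P G) /\
  (* (ii) *)
  (forall Gt : X -> Y -> nat, is_Gstar q Qstar Gt ->
     forall P, Fam P -> redundancy q rho P Gt <= C + ln (1 + ln (INR #|X|))).
Proof.
have [x0 [y0 _]] := pos_pmf_inhabited HQstar.
split.
- (* if every P in Fam had R(P, G) <= b, then b + ln K would bound
     q RE(., Q_G) on Fam, contradicting the minimality of C *)
  move=> G HG b Hb; apply: NNPP => Hnone.
  have Hub : is_upper_bound
      (fun w => exists P, Fam P /\ w = q * RE (q / (1 + rho)) q P (QG q rho G))
      (b + ln (1 + ln (INR #|X|))).
    move=> _ [P [HP ->]].
    have Hred : redundancy q rho P G <= b.
      by apply: Rnot_lt_le => Hlt; apply: Hnone; exists P.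
    have := RE_QG_le_redundancy Hrho Hq x0 y0 (proj1 (HFam P HP)) HG; lra.
  have := Hmin _ (QG_pmf q rho x0 y0 G) _ Hub; lra.
- move=> Gt HGt P HP.
  have := redundancy_le_RE Hrho Hq x0 y0 (proj1 (HFam P HP)) (proj1 HQstar) HGt.
  have : q * RE (q / (1 + rho)) q P Qstar <= C by apply: (proj1 HC); exists P.
  lra.
Qed.
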